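(* Let $|\Psi\rangle$ be a normalized state of $N$ qubits given by an open MPS in canonical Vidal form $\{\Gamma^{[i]},\Lambda^{[j]}\}$, fix a positive integer $\chi'$, let $|\tilde{\Psi}_{T}\rangle$ be the parallel-compressed MPS and $n=\big\||\tilde{\Psi}_{T}\rangle\big\|$. For $i=1,\dots,N-1$ let $\epsilon_i(\chi')=\sum_{\alpha>\chi'}(\Lambda^{[i]}_{\alpha\alpha})^2$, $\epsilon(\chi')=\sum_{i=1}^{N-1}\epsilon_i(\chi')$, $\nu_i=[1-\epsilon_i(\chi')]^{-1/2}$, and define the stabilized norm $n^*=n\prod_{i=1}^{N-1}\nu_i$. Then $$n^*_{\mathrm{lower}}\le n^*\le n^*_{\mathrm{upper}},\qquad n^*_{\mathrm{lower}}=\Big(1-\sqrt{2\epsilon(\chi')}\Big)\prod_{i=1}^{N-1}\nu_i,\quad n^*_{\mathrm{upper}}=\prod_{i=1}^{N-1}\nu_i,$$ with $n^*_{\mathrm{lower}}\le 1$ and $n^*_{\mathrm{upper}}\ge 1$. Moreover, $n^*_{\mathrm{lower}}$ and $n^*_{\mathrm{upper}}$ converge to $1$ uniformly as $\epsilon(\chi')\to 0$ (i.e., for every $\delta>0$ there is $\eta>0$, independent of $N$ and of the MPS, such that $\epsilon(\chi')<\eta$ implies $|n^*_{\mathrm{lower}}-1|<\delta$ and $|n^*_{\mathrm{upper}}-1|<\delta$).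
   Context: An open MPS in Vidal form on $N$ sites with local dimension $d$ (here $d=2$) consists of tensors $\Gamma^{[i]\sigma_i}$ ($i=1,\dots,N$), each a $\chi_{i-1}\times\chi_i$ matrix for fixed $\sigma_i$, and real diagonal $\chi_i\times\chi_i$ matrices $\Lambda^{[i]}$ ($i=0,\dots,N$) with nonnegative diagonal entries in descending order, $\chi_0=\chi_N=1$, $\Lambda^{[0]}=\Lambda^{[N]}=(1)$, representing $|\Psi\rangle=\sum_{\sigma}\mathrm{Tr}(\Lambda^{[0]}\Gamma^{[1]\sigma_1}\Lambda^{[1]}\cdots\Lambda^{[N-1]}\Gamma^{[N]\sigma_N}\Lambda^{[N]})|\sigma_1\cdots\sigma_N\rangle$. Canonical form means: for every $i$, with $A^{[i]\sigma}=\Lambda^{[i-1]}\Gamma^{[i]\sigma}$ and $B^{[i]\sigma}=\Gamma^{[i]\sigma}\Lambda^{[i]}$, $\sum_\sigma (A^{[i]\sigma})^\dagger A^{[i]\sigma}=I_{\chi_i}$ and $\sum_\sigma B^{[i]\sigma}(B^{[i]\sigma})^\dagger=I_{\chi_{i-1}}$; then $\sum_\alpha(\Lambda^{[i]}_{\alpha\alpha})^2=1$ for each $i$ (so $\epsilon_i(\chi')<1$ when $\chi'\ge1$). $P_i$ is the projector onto the first $\min(\chi',\chi_i)$ standard basis vectors of the bond-$i$ space, and the parallel-compressed state is $|\tilde{\Psi}_{T}\rangle=\sum_{\sigma}\mathrm{Tr}(\Lambda^{[0]}\Gamma^{[1]\sigma_1}P_1\Lambda^{[1]}\Gamma^{[2]\sigma_2}\cdots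 P_{N-1}\Lambda^{[N-1]}\Gamma^{[N]\sigma_N}\Lambda^{[N]})|\sigma_1\cdots\sigma_N\rangle$. Empty sums are zero. *)

From mathcomp Require Import all_boot all_order all_algebra.
Set Implicit Arguments. Unset Strict Implicit. Unset Printing Implicit Defensive.
Import Order.TTheory GRing.Theory Num.Theory.
Local Open Scope ring_scope.

(* Sites are numbered 0..N-1
   (paper: 1..N) and bonds 0..N (as in the paper).
   - chi k        : bond dimension chi_k
   - Gamma k s    : Gamma^{[k+1] s}, a chi_k x chi_{k+1} matrix
   - lam k        : the diagonal of Lambda^{[k]} (row vector of size chi_k) *)
Section MPS.
Variable C : numClosedFieldType.
Variable N : nat.
Variable chi : nat -> nat.
Variable Gamma : forall k : nat, 'I_2 -> 'M[C]_(chi k, chi k.+1).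
Variable lam : forall k : nat, 'rV[C]_(chi k).

Definition Lam k : 'M[C]_(chi k) := diag_mx (lam k).

Definition adj m n (A : 'M[C]_(m, n)) : 'M[C]_(n, m) := map_mx (fun x => x^*) A^T.

Definition vidal_canonical : Prop :=
  chi 0 = 1%N /\ chi N = 1%N /\
  (forall j, lam 0 0 j = 1) /\ (forall j, lam N 0 j = 1) /\
  (forall k (a : 'I_(chi k)), (k <= N)%N -> 0 <= lam k 0 a) /\
  (forall k (a b : 'I_(chi k)), (k <= N)%N -> (a <= b)%N -> lam k 0 b <= lam k 0 a) /\
  (forall k, (k < N)%N ->
     \sum_(s < 2) adj (Lam k *m Gamma k s) *m (Lam k *m Gamma k s) = 1%:M /\
     \sum_(s < 2) (Gamma k s *m Lam k.+1) *m adj (Gamma k s *m Lam k.+1) = 1%:M).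

Fixpoint pref (P : forall k, 'M[C]_(chi k)) (s : nat -> 'I_2) (k : nat)
  : 'M[C]_(chi 0, chi k) :=
  match k as k0 return 'M[C]_(chi 0, chi k0) with
  | 0 => Lam 0
  | k'.+1 => pref P s k' *m Gamma k' (s k') *m P k'.+1 *m Lam k'.+1
  end.

Definition ext_conf (sigma : {ffun 'I_N -> 'I_2}) (k : nat) : 'I_2 :=
  match (insub k : option 'I_N) with Some i => sigma i | None => ord0 end.

(* Amplitude: the trace of the (1 x 1, since chi_0 = chi_N = 1) product. *)
Definition amp (P : forall k, 'M[C]_(chi k)) (sigma : {ffun 'I_N -> 'I_2}) : C :=
  \sum_(a < chi 0) \sum_(b < chi N) pref P (ext_conf sigma) N a b.

Definition norm2 (P : forall k, 'M[C]_(chi k)) : C :=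
  \sum_(sigma : {ffun 'I_N -> 'I_2}) `|amp P sigma| ^+ 2.

Definition id_bonds : forall k, 'M[C]_(chi k) := fun k => 1%:M.

Definition trunc_proj (chi' : nat) : forall k, 'M[C]_(chi k) := fun k =>
  diag_mx (\row_(j < chi k)
    (if (0 < k < N)%N && (chi' <= j)%N then 0 else 1)).

(* epsilon_i(chi') = sum_{alpha > chi'} Lambda^[i]_{alpha alpha}^2 (1-based alpha) *)
Definition eps_i (chi' k : nat) : C :=
  \sum_(a < chi k | (chi' <= a)%N) (lam k 0 a) ^+ 2.
Definition eps_tot (chi' : nat) : C := \sum_(1 <= k < N) eps_i chi' k.
Definition nu (chi' k : nat) : C := (sqrtC (1 - eps_i chi' k))^-1.
Definition n_upper (chi' : nat) : C := \prod_(1 <= k < N) nu chi' k.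
Definition n_lower (chi' : nat) : C := (1 - sqrtC (2 * eps_tot chi')) * n_upper chi'.
Definition n_T (chi' : nat) : C := sqrtC (norm2 (trunc_proj chi')).
Definition n_star (chi' : nat) : C := n_T chi' * n_upper chi'.

End MPS.

From mathcomp Require Import all_boot all_order all_algebra.
From mathcomp Require Import ring.
Set Implicit Arguments. Unset Strict Implicit. Unset Printing Implicit Defensive.
Import Order.TTheory GRing.Theory Num.Theory.
Local Open Scope ring_scope.

(* Write the amplitudes with the left-canonical tensors A^[k+1]s = Lam^[k] Gamma^[k+1]s
   ([site k s]).  Squared norms and the overlap <Psi|Psi_T> are then corner entries of the
   transfer matrices M_k = P_k^* (sum_s A^s* M_(k-1) A^s) P'_k ([overlap P P' k]).
   Left canonicity says that X |-> sum_s A^s* X A^s fixes the identity, so M_k <= 1 as a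
   hermitian form whenever the bond operators are contractions: this gives n <= 1 and,
   with the Cauchy-Schwarz inequality propagated along the chain, bounds the diagonal
   entries of sum_s A^s* M_k A^s by 1.  Right canonicity makes tr (Lam^[k] M_k Lam^[k])
   invariant under an untruncated step, so the projector P_k changes it by at most eps_k
   and |1 - <Psi|Psi_T>| <= eps.  Cauchy-Schwarz once more gives
   2 (1 - eps) <= 2 |<Psi|Psi_T>| <= 1 + n^2, hence n >= sqrt (1 - 2 eps) >= 1 - sqrt (2 eps);
   the bounds on prod nu_i come from the Weierstrass inequality prod (1 - eps_i) >= 1 - eps. *)

Lemma ler_norm_sumMn (R : numDomainType) (I : Type) (r : seq I) (F G : I -> R) :
  (forall i, `|F i| *+ 2 <= G i) -> `|\sum_(i <- r) F i| *+ 2 <= \sum_(i <- r) G i.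
Proof.
move=> FG; apply: le_trans (_ : (\sum_(i <- r) `|F i|) *+ 2 <= _).
  by rewrite lerMn2r ler_norm_sum orbT.
by rewrite -sumrMnl; apply: ler_sum => i _.
Qed.

Lemma big_ord_card1 (V : nmodType) n (F : 'I_n -> V) (i : 'I_n) :
  n = 1%N -> \sum_j F j = F i.
Proof. by move=> n1; subst n; rewrite big_ord1 (ord1 i). Qed.

Lemma sqr_norm_sum_card1 (R : numDomainType) n (F : 'I_n -> R) :
  n = 1%N -> `|\sum_j F j| ^+ 2 = \sum_j `|F j| ^+ 2.
Proof. by move=> n1; subst n; rewrite !big_ord1. Qed.

Section FfunSnoc.
Variables (T : finType) (k : nat).

Definition ffun_snoc (t : {ffun 'I_k -> T}) (x : T) : {ffun 'I_k.+1 -> T} :=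
  [ffun j => if unlift ord_max j is Some j' then t j' else x].

Lemma ffun_snoc_lift t x (j : 'I_k) : ffun_snoc t x (lift ord_max j) = t j.
Proof. by rewrite ffunE liftK. Qed.

Lemma ffun_snoc_last t x : ffun_snoc t x ord_max = x.
Proof. by rewrite ffunE unlift_none. Qed.

Lemma big_ffun_snoc (V : nmodType) (F : {ffun 'I_k.+1 -> T} -> V) :
  \sum_t F t = \sum_(t : {ffun 'I_k -> T}) \sum_x F (ffun_snoc t x).
Proof.
rewrite pair_big /= (reindex (fun p => ffun_snoc p.1 p.2)) //.
exists (fun t : {ffun 'I_k.+1 -> T} => ([ffun j => t (lift ord_max j)], t ord_max)).
  move=> [t x] _ /=.
  by congr pair; [apply/ffunP => j; rewrite ffunE ffun_snoc_lift | rewrite ffun_snoc_last].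
move=> t _; apply/ffunP => j; rewrite ffunE.
by case: unliftP => [j' ->|->]; rewrite ?ffunE.
Qed.

End FfunSnoc.

Lemma ext_conf_snoc_lt k (t : {ffun 'I_k -> 'I_2}) x j :
  (j < k)%N -> ext_conf (ffun_snoc t x) j = ext_conf t j.
Proof.
move=> jk; have jk1 : (j < k.+1)%N := ltnW jk.
rewrite /ext_conf (insubT (fun j => j < k.+1)%N jk1) (insubT (fun j => j < k)%N jk) /=.
have -> : Sub j jk1 = lift ord_max (Sub j jk : 'I_k).
  by apply: val_inj; rewrite /= /bump leqNgt jk.
exact: ffun_snoc_lift.
Qed.

Lemma ext_conf_snoc_last k (t : {ffun 'I_k -> 'I_2}) x : ext_conf (ffun_snoc t x) k = x.
Proof.
rewrite /ext_conf (insubT (fun j => j < k.+1)%N (ltnSn k)) /=.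
have -> : Sub k (ltnSn k) = ord_max :> 'I_k.+1 by apply: val_inj.
exact: ffun_snoc_last.
Qed.

Section StabilizedBounds.
Variable C : numClosedFieldType.

Lemma one_sub_sum_le_prod (I : Type) (r : seq I) (P : pred I) (e : I -> C) :
  (forall i, P i -> 0 <= e i <= 1) ->
  1 - \sum_(i <- r | P i) e i <= \prod_(i <- r | P i) (1 - e i).
Proof.
move=> e01; elim: r => [|i r IH]; first by rewrite !big_nil subr0.
rewrite !big_cons; case: ifP => // Pi; have /andP[ei_ge0 ei_le1] := e01 i Pi.
have sum_ge0 : 0 <= \sum_(j <- r | P j) e j.
  by apply: sumr_ge0 => j /e01 /andP[].
apply: le_trans (ler_wpM2l _ IH); last by rewrite subr_ge0.
have -> : (1 - e i) * (1 - \sum_(j <- r | P j) e j) =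
          1 - (e i + \sum_(j <- r | P j) e j) + e i * \sum_(j <- r | P j) e j by ring.
by rewrite lerDl mulr_ge0.
Qed.

Lemma prod_sqrtC_bounds m n (e : nat -> C) :
  (forall k, (m <= k < n)%N -> 0 <= e k < 1) ->
  [/\ 0 < \prod_(m <= k < n) sqrtC (1 - e k), \prod_(m <= k < n) sqrtC (1 - e k) <= 1
    & 1 - \sum_(m <= k < n) e k <= (\prod_(m <= k < n) sqrtC (1 - e k)) ^+ 2].
Proof.
move=> e01; have e01' k : (m <= k < n)%N -> 0 <= e k <= 1.
  by move/e01/andP => [-> /ltW].
rewrite !big_nat; split.
- by apply: prodr_gt0 => k /e01/andP[_]; rewrite sqrtC_gt0 subr_gt0.
- apply: prodr_ile1 => k /e01'/andP[ek_ge0 ek_le1]; rewrite sqrtC_ge0 subr_ge0 ek_le1 /=.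
  by rewrite -[X in _ <= X]sqrtC1 ler_sqrtC ?nnegrE ?subr_ge0 // gerBl.
- rewrite -prodrXl [X in _ <= X](eq_bigr (fun k => 1 - e k)) => [|k _]; last exact: sqrtCK.
  exact: one_sub_sum_le_prod.
Qed.

Lemma sub1_sqrtC_le (u x : C) : 0 <= u -> 0 <= x -> 1 - u <= x -> 1 - sqrtC u <= sqrtC x.
Proof.
move=> u_ge0 x_ge0 ux; set t := sqrtC u.
have t_ge0 : 0 <= t by rewrite sqrtC_ge0.
have [t_ge1|t_lt1] := real_leP (@real1 C) (ger0_real t_ge0).
  by apply: le_trans (_ : _ <= 0) _; rewrite ?subr_le0 ?sqrtC_ge0.
rewrite -(sqrCK (x := 1 - t)) ?subr_ge0 ?(ltW t_lt1) //.
rewrite ler_sqrtC ?nnegrE ?exprn_ge0 ?subr_ge0 ?(ltW t_lt1) //.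
apply: le_trans ux; rewrite -[u]sqrtCK -/t -subr_ge0.
have -> : 1 - t ^+ 2 - (1 - t) ^+ 2 = 2 * t * (1 - t) by ring.
by rewrite !mulr_ge0 ?ler0n // subr_ge0 ltW.
Qed.

Variables (S eps : C).
Hypotheses (S_gt0 : 0 < S) (S_le1 : S <= 1) (eps_ge0 : 0 <= eps) (S_ge : 1 - eps <= S ^+ 2).

Lemma stab_upper_ge1 : 1 <= S^-1.
Proof. by rewrite invf_ge1. Qed.

Lemma stab_lower_le1 : (1 - sqrtC (2 * eps)) / S <= 1.
Proof.
rewrite ler_pdivrMr // mul1r -[X in _ <= X](sqrCK (ltW S_gt0)).
apply: sub1_sqrtC_le; rewrite ?mulr_ge0 ?exprn_ge0 ?ler0n ?(ltW S_gt0) //.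
by apply: le_trans S_ge; rewrite lerD2l lerN2 ler_peMl ?ler1n.
Qed.

Lemma stab_upper_close : 2 * eps <= 1 -> `|S^-1 - 1| <= 2 * eps.
Proof.
move=> eps_le; rewrite ger0_norm ?subr_ge0 ?stab_upper_ge1 // lerBlDl.
rewrite -[S^-1]mul1r ler_pdivrMr //.
have S_ge' : 1 - eps <= S.
  by apply: le_trans S_ge _; rewrite expr2 ler_piMr ?(ltW S_gt0).
apply: le_trans (_ : (1 + 2 * eps) * (1 - eps) <= _); last first.
  by rewrite ler_wpM2l // addr_ge0 ?mulr_ge0 ?ler0n.
have -> : (1 + 2 * eps) * (1 - eps) = 1 + eps * (1 - 2 * eps) by ring.
by rewrite lerDl mulr_ge0 // subr_ge0.
Qed.

Lemma stab_lower_close : sqrtC (2 * eps) <= 1 ->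
  `|(1 - sqrtC (2 * eps)) / S - 1| <= sqrtC (2 * eps).
Proof.
move=> t_le1; rewrite ler0_norm ?subr_le0 ?stab_lower_le1 // opprB lerBlDl -lerBlDr.
by rewrite ler_peMr ?subr_ge0 ?stab_upper_ge1.
Qed.

End StabilizedBounds.

Lemma stab_uniform (C : numClosedFieldType) (delta : C) : 0 < delta ->
  exists2 eta : C, 0 < eta & forall S eps : C,
    0 < S -> S <= 1 -> 0 <= eps -> 1 - eps <= S ^+ 2 -> eps < eta ->
    `|(1 - sqrtC (2 * eps)) / S - 1| < delta /\ `|S^-1 - 1| < delta.
Proof.
move=> delta_gt0.
have [r_gt0 r_lt1 r_lt_delta] : [/\ 0 < delta / (1 + delta), delta / (1 + delta) < 1
                                  & delta / (1 + delta) < delta].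
  have d1 : 0 < 1 + delta by rewrite addr_gt0.
  by rewrite divr_gt0 // !ltr_pdivrMr // mul1r ltrDr ltr01 ltr_pMr // ltrDl.
set r := delta / (1 + delta) in r_gt0 r_lt1 r_lt_delta *.
have r2_lt_r : r ^+ 2 < r by rewrite expr2 gtr_pMr.
exists (r ^+ 2 / 2) => [|S eps S_gt0 S_le1 eps_ge0 S_ge]; first by rewrite divr_gt0 ?exprn_gt0.
rewrite ltr_pdivlMr ?ltr0n // mulrC => eps_lt.
have t_lt_r : sqrtC (2 * eps) < r.
  rewrite -(sqrCK (ltW r_gt0)) ltr_sqrtC // nnegrE ?exprn_ge0 ?(ltW r_gt0) //.
  by rewrite mulr_ge0 ?ler0n.
split.
  apply: le_lt_trans (stab_lower_close S_gt0 S_le1 eps_ge0 S_ge _) (lt_trans t_lt_r r_lt_delta).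
  exact/ltW/(lt_trans t_lt_r r_lt1).
apply: le_lt_trans (stab_upper_close S_gt0 S_le1 eps_ge0 S_ge _) _.
  exact/ltW/(lt_trans eps_lt (lt_trans r2_lt_r r_lt1)).
exact: lt_trans eps_lt (lt_trans r2_lt_r r_lt_delta).
Qed.

Definition stab_factor (C : numClosedFieldType) (chi : nat -> nat) (N : nat)
    (lam : forall k, 'rV[C]_(chi k)) (chi' : nat) : C :=
  \prod_(1 <= k < N) sqrtC (1 - eps_i lam chi' k).

Lemma n_upperE (C : numClosedFieldType) chi N (lam : forall k, 'rV[C]_(chi k)) chi' :
  n_upper N lam chi' = (stab_factor N lam chi')^-1.
Proof. exact: prodfV. Qed.

Section Sesquilinear.
Variable C : numClosedFieldType.

Lemma adjM m n p (X : 'M[C]_(m, n)) (Y : 'M[C]_(n, p)) : adj (X *m Y) = adj Y *m adj X.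
Proof. by rewrite /adj trmx_mul map_mxM. Qed.

Lemma adj1 n : adj (1%:M : 'M[C]_n) = 1%:M.
Proof. by apply/matrixP => i j; rewrite !mxE eq_sym; case: eqP; rewrite ?conjC1 ?conjC0. Qed.

Definition qform n (M : 'M[C]_n) (c c' : 'cV[C]_n) : C := (adj c *m M *m c') 0 0.

Lemma qform_conj n m (P P' : 'M[C]_(n, m)) M c c' :
  qform (adj P *m M *m P') c c' = qform M (P *m c) (P' *m c').
Proof. by rewrite /qform !adjM !mulmxA. Qed.

Lemma qform_delta n (M : 'M[C]_n) a b : qform M (delta_mx a 0) (delta_mx b 0) = M a b.
Proof.
rewrite /qform; have -> : adj (delta_mx a 0 : 'cV[C]_n) = delta_mx 0 a.
  by apply/matrixP => i j; rewrite !mxE ord1 eqxx andbC; case: (_ == _); rewrite ?conjC1 ?conjC0.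
by rewrite -rowE -colE !mxE.
Qed.

Lemma qform1E n (c c' : 'cV[C]_n) : qform 1%:M c c' = \sum_a (c a 0)^* * c' a 0.
Proof. by rewrite /qform mulmx1 mxE; apply: eq_bigr => a _; rewrite !mxE. Qed.

Definition cs_dominated n (M M1 M2 : 'M[C]_n) : Prop :=
  forall c c', `|qform M c c'| *+ 2 <= qform M1 c c + qform M2 c' c'.

Lemma cs_dominated1 n : cs_dominated (1%:M : 'M[C]_n) 1%:M 1%:M.
Proof.
move=> c c'; rewrite !qform1E -big_split /=; apply: ler_norm_sumMn => a.
rewrite normrM norm_conjC -!normCKC.
exact: leif_le (real_leif_mean_square_scaled (normr_real _) (normr_real _)).
Qed.

Lemma cs_dominated_conj n m (P P' : 'M[C]_(n, m)) M M1 M2 : cs_dominated M M1 M2 ->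
  cs_dominated (adj P *m M *m P') (adj P *m M1 *m P) (adj P' *m M2 *m P').
Proof. by move=> HM c c'; rewrite !qform_conj. Qed.

Definition le1_form n (M : 'M[C]_n) : Prop := forall c, qform M c c <= qform 1%:M c c.

Lemma le1_form_entry n (M M1 M2 : 'M[C]_n) a b :
  cs_dominated M M1 M2 -> le1_form M1 -> le1_form M2 -> `|M a b| <= 1.
Proof.
move=> HM H1 H2; have := HM (delta_mx a 0) (delta_mx b 0).
move/le_trans/(_ (lerD (H1 _) (H2 _))); rewrite !qform_delta !mxE !eqxx.
by rewrite -mulr2n lerMn2r.
Qed.

Lemma le1_form_conj n m (P : 'M[C]_(n, m)) M :
  le1_form M -> le1_form (adj P *m P) -> le1_form (adj P *m M *m P).
Proof.
move=> HM HP c; rewrite qform_conj; apply: le_trans (HM _) _.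
by have := HP c; rewrite -{1}(mulmx1 (adj P)) qform_conj.
Qed.

End Sesquilinear.

Section Transfer.
Variables (C : numClosedFieldType) (chi : nat -> nat).
Variable Gamma : forall k : nat, 'I_2 -> 'M[C]_(chi k, chi k.+1).
Variable lam : forall k : nat, 'rV[C]_(chi k).

Definition site k x : 'M[C]_(chi k, chi k.+1) := Lam lam k *m Gamma k x.

Definition transfer k (X : 'M[C]_(chi k)) : 'M[C]_(chi k.+1) :=
  \sum_(x < 2) adj (site k x) *m X *m site k x.

Fixpoint lprod (P : forall k, 'M[C]_(chi k)) (s : nat -> 'I_2) k : 'M[C]_(chi 0, chi k) :=
  if k is k'.+1 then lprod P s k' *m site k' (s k') *m P k'.+1 else 1%:M.

Fixpoint overlap (P P' : forall k, 'M[C]_(chi k)) k : 'M[C]_(chi k) :=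
  if k is k'.+1 then adj (P k'.+1) *m transfer (overlap P P' k') *m P' k'.+1
  else 1%:M.

Lemma pref_lprod P s k : pref Gamma lam P s k = lprod P s k *m Lam lam k.
Proof. by elim: k => [|k IH] /=; rewrite ?mul1mx // IH /site !mulmxA. Qed.

Lemma lprod_ext P s s' k : {in gtn k, s =1 s'} -> lprod P s k = lprod P s' k.
Proof.
elim: k => [|k IH] //= ss'.
by rewrite ss' ?inE ?ltnSn // IH // => j /ltnW; apply: ss'.
Qed.

Lemma lprod_snoc P k (t : {ffun 'I_k -> 'I_2}) x :
  lprod P (ext_conf (ffun_snoc t x)) k.+1 = lprod P (ext_conf t) k *m site k x *m P k.+1.
Proof.
rewrite /= ext_conf_snoc_last; congr (_ *m _ *m _).
by apply: lprod_ext => j; rewrite inE => /ext_conf_snoc_lt ->.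
Qed.

Lemma overlap_sum P P' k : overlap P P' k =
  \sum_(t : {ffun 'I_k -> 'I_2}) adj (lprod P (ext_conf t) k) *m lprod P' (ext_conf t) k.
Proof.
elim: k => [|k IH]; first by rewrite /= sumr_const card_ffun !card_ord expn0 adj1 mulmx1.
rewrite [LHS]/= big_ffun_snoc exchange_big IH /transfer mulmx_sumr mulmx_suml.
apply: eq_bigr => x _; rewrite mulmx_sumr mulmx_suml mulmx_sumr mulmx_suml.
apply: eq_bigr => t _.
by rewrite !lprod_snoc !adjM !mulmxA.
Qed.

Lemma norm2_ge0 N P : 0 <= norm2 N Gamma lam P.
Proof. by apply: sumr_ge0 => s _; apply: exprn_ge0. Qed.

Lemma qform_transfer k X c c' :
  qform (transfer X) c c' = \sum_(x < 2) qform X (site k x *m c) (site k x *m c').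
Proof.
rewrite /qform /transfer mulmx_sumr mulmx_suml summxE.
by apply: eq_bigr => x _; rewrite !adjM !mulmxA.
Qed.

Lemma cs_dominated_transfer k (M M1 M2 : 'M[C]_(chi k)) : cs_dominated M M1 M2 ->
  cs_dominated (transfer M) (transfer M1) (transfer M2).
Proof.
by move=> HM c c'; rewrite !qform_transfer -big_split; apply: ler_norm_sumMn => x.
Qed.

Lemma cs_dominated_overlap P P' k :
  cs_dominated (overlap P P' k) (overlap P P k) (overlap P' P' k).
Proof.
elim: k => [|k IH] /=; first exact: cs_dominated1.
exact/cs_dominated_conj/cs_dominated_transfer.
Qed.

Lemma mxtrace_Lam k (X : 'M[C]_(chi k)) :
  \tr (Lam lam k *m X *m Lam lam k) = \sum_a lam k 0 a ^+ 2 * X a a.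
Proof.
apply: eq_bigr => a _; rewrite /Lam mul_mx_diag mul_diag_mx !mxE.
by rewrite mulrC mulrA -expr2 mulrC.
Qed.

Section VidalCanonical.
Variable N : nat.
Hypothesis Hcan : vidal_canonical N Gamma lam.

Local Notation L := (Lam lam).
Local Notation Id := (id_bonds C chi).

Lemma chi0 : chi 0 = 1%N.
Proof. by case: Hcan. Qed.

Lemma chiN : chi N = 1%N.
Proof. by case: Hcan => _ []. Qed.

Lemma lam0 j : lam 0 0 j = 1.
Proof. by case: Hcan => _ [_ []]. Qed.

Lemma lamN j : lam N 0 j = 1.
Proof. by case: Hcan => _ [_ [_ []]]. Qed.

Lemma lam_ge0 k a : (k <= N)%N -> 0 <= lam k 0 a.
Proof. by case: Hcan => _ [_ [_ [_ [H _]]]]; apply: H. Qed.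

Lemma lam_le k (a b : 'I_(chi k)) : (k <= N)%N -> (a <= b)%N -> lam k 0 b <= lam k 0 a.
Proof. by case: Hcan => _ [_ [_ [_ [_ [H _]]]]]; apply: H. Qed.

Lemma left_canonical k : (k < N)%N -> \sum_(x < 2) adj (site k x) *m site k x = 1%:M.
Proof. by case: Hcan => _ [_ [_ [_ [_ [_ H]]]]] /H []. Qed.

Lemma right_canonical k : (k < N)%N ->
  \sum_(x < 2) (Gamma k x *m L k.+1) *m adj (Gamma k x *m L k.+1) = 1%:M.
Proof. by case: Hcan => _ [_ [_ [_ [_ [_ H]]]]] /H []. Qed.

Lemma adj_Lam k : (k <= N)%N -> adj (L k) = L k.
Proof.
move=> kN; apply/matrixP => i j; rewrite !mxE.
by rewrite eq_sym; case: eqP => [->|_]; rewrite ?mulr1n ?mulr0n ?conjC0 // geC0_conj // lam_ge0.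
Qed.

Lemma transfer1 k : (k < N)%N -> transfer (1%:M : 'M[C]_(chi k)) = 1%:M.
Proof.
by move=> kN; rewrite -(left_canonical kN); apply: eq_bigr => x _; rewrite mulmx1.
Qed.

Lemma le1_form_transfer k (M : 'M[C]_(chi k)) :
  (k < N)%N -> le1_form M -> le1_form (transfer M).
Proof.
move=> kN HM c; rewrite -(transfer1 kN) !qform_transfer.
by apply: ler_sum => x _; apply: HM.
Qed.

Definition contractive_bonds (P : forall k, 'M[C]_(chi k)) : Prop :=
  forall k, (0 < k <= N)%N -> le1_form (adj (P k) *m P k).

Lemma le1_form_overlap P k : contractive_bonds P -> (k <= N)%N -> le1_form (overlap P P k).
Proof.
move=> HP; elim: k => [|k IH] kN /=; first by move=> c.
by apply: le1_form_conj (le1_form_transfer kN (IH (ltnW kN))) _; apply: HP.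
Qed.

Lemma mxtrace_transfer k (X : 'M[C]_(chi k)) : (k < N)%N ->
  \tr (L k.+1 *m transfer X *m L k.+1) = \tr (L k *m X *m L k).
Proof.
move=> kN; have kN' := ltnW kN.
have right_sum : \sum_(x < 2) site k x *m L k.+1 *m L k.+1 *m adj (site k x) = L k *m L k.
  have -> : L k *m L k = L k *m (\sum_(x < 2) (Gamma k x *m L k.+1) *m
                             adj (Gamma k x *m L k.+1)) *m L k.
    by rewrite right_canonical // mulmx1.
  rewrite mulmx_sumr mulmx_suml; apply: eq_bigr => x _.
  by rewrite /site !adjM adj_Lam // adj_Lam // !mulmxA.
rewrite /transfer mulmx_sumr mulmx_suml linear_sum /=.
transitivity (\tr ((\sum_(x < 2) site k x *m L k.+1 *m L k.+1 *m adj (site k x)) *m X)).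
  rewrite mulmx_suml linear_sum; apply: eq_bigr => x _.
  move: (site k x) => a.
  by rewrite [LHS]mxtrace_mulC !mulmxA [LHS]mxtrace_mulC !mulmxA.
by rewrite right_sum -mulmxA mxtrace_mulC.
Qed.

Lemma sum_lam_sqr k : (k <= N)%N -> \sum_a lam k 0 a ^+ 2 = 1.
Proof.
elim: k => [|k IH] kN.
  by under eq_bigr do rewrite lam0 expr1n; rewrite sumr_const card_ord chi0.
have := mxtrace_transfer 1%:M kN; rewrite transfer1 // !mxtrace_Lam.
under eq_bigr do rewrite mxE eqxx mulr1.
by under [RHS]eq_bigr do rewrite mxE eqxx mulr1; move->; apply: IH (ltnW kN).
Qed.

Lemma eps_i_ge0 chi' k : (k <= N)%N -> 0 <= eps_i lam chi' k.
Proof. by move=> kN; apply: sumr_ge0 => a _; rewrite exprn_ge0 // lam_ge0. Qed.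

Lemma eps_i_lt1 chi' k : (0 < chi')%N -> (k <= N)%N -> eps_i lam chi' k < 1.
Proof.
move=> chi'_gt0 kN; have sum1 := sum_lam_sqr kN.
have sum_ne0 : \sum_a lam k 0 a ^+ 2 != 0 by rewrite sum1 oner_eq0.
rewrite (bigID (fun a : 'I_(chi k) => (chi' <= a)%N)) /= in sum1.
rewrite /eps_i -subr_gt0 -[X in X - _]sum1 addrC addrK.
have [chik0|chik_gt0] := posnP (chi k).
  by move: sum_ne0; rewrite big1 ?eqxx // => -[a ha]; exfalso; rewrite chik0 in ha.
pose a0 : 'I_(chi k) := Ordinal chik_gt0.
have lam_a0 : 0 < lam k 0 a0 ^+ 2.
  rewrite exprn_gt0 // lt_def lam_ge0 // andbT; apply: contraNneq sum_ne0 => lam_a0.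
  apply/eqP/big1 => a _; apply/eqP; rewrite expf_eq0 /= eq_le lam_ge0 // andbT.
  by rewrite -lam_a0 lam_le.
rewrite (bigD1 a0) -?ltnNge //=; apply: lt_le_trans lam_a0 _.
by rewrite lerDl sumr_ge0 // => a _; rewrite exprn_ge0 // lam_ge0.
Qed.

Lemma eps_i_N chi' : (0 < chi')%N -> eps_i lam chi' N = 0.
Proof.
move=> chi'_gt0; apply: big1 => -[a ha] /= chi'_le; exfalso.
have : (a < 1)%N by rewrite -chiN.
by rewrite ltnS leqn0 => /eqP a0; move: chi'_le; rewrite a0 leqNgt chi'_gt0.
Qed.

Lemma contractive_id : contractive_bonds Id.
Proof. by move=> k _ c; rewrite /id_bonds adj1 mulmx1. Qed.

Lemma contractive_trunc chi' : contractive_bonds (trunc_proj C N chi chi').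
Proof.
move=> k _ c; rewrite -{1}(mulmx1 (adj _)) qform_conj !qform1E.
apply: ler_sum => a _; rewrite -!normCKC /trunc_proj mul_diag_mx !mxE.
by case: ifP; rewrite ?mul0r ?mul1r ?normr0 ?expr0n ?exprn_ge0.
Qed.

Definition overlap_trace P P' k : C := \tr (L k *m overlap P P' k *m L k).

Lemma overlap_trace0 P P' : overlap_trace P P' 0 = 1.
Proof.
rewrite /overlap_trace mxtrace_Lam -[RHS](sum_lam_sqr (leq0n N)).
by apply: eq_bigr => a _; rewrite mxE eqxx mulr1.
Qed.

Lemma overlap_trace_step chi' k : (k < N)%N ->
  `|overlap_trace Id (trunc_proj C N chi chi') k
    - overlap_trace Id (trunc_proj C N chi chi') k.+1| <= eps_i lam chi' k.+1.
Proof.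
move=> kN; set T := trunc_proj C N chi chi'.
have E_le1 a : `|transfer (overlap Id T k) a a| <= 1.
  apply: (le1_form_entry _ _ (cs_dominated_transfer (cs_dominated_overlap Id T (k:=k)))).
    exact: le1_form_transfer kN (le1_form_overlap contractive_id (ltnW kN)).
  exact: le1_form_transfer kN (le1_form_overlap (contractive_trunc chi') (ltnW kN)).
rewrite /overlap_trace -(mxtrace_transfer _ kN) [overlap _ _ k.+1]/= /id_bonds adj1 mul1mx.
rewrite !mxtrace_Lam -sumrB /eps_i [X in _ <= X]big_mkcond /=.
apply: le_trans (ler_norm_sum _ _ _) _; apply: ler_sum => a _.
rewrite -mulrBr /T /trunc_proj mul_mx_diag !mxE.
case: ifP => [/andP[_ ->]|]; last first.
  by rewrite mulr1 subrr mulr0 normr0; case: ifP => // _; rewrite exprn_ge0 // lam_ge0.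
rewrite mulr0 subr0 normrM ger0_norm ?exprn_ge0 ?lam_ge0 //.
by rewrite ler_piMr ?exprn_ge0 ?lam_ge0.
Qed.

Lemma overlap_trace_N P P' (b : 'I_(chi N)) : overlap_trace P P' N = overlap P P' N b b.
Proof. by rewrite /overlap_trace mxtrace_Lam (big_ord_card1 _ b chiN) lamN expr1n mul1r. Qed.

Lemma norm2_overlap P (b : 'I_(chi N)) : norm2 N Gamma lam P = overlap P P N b b.
Proof.
rewrite overlap_sum summxE; apply: eq_bigr => t _.
rewrite /amp (sqr_norm_sum_card1 _ chi0) mxE; apply: eq_bigr => a _.
by rewrite (big_ord_card1 _ b chiN) pref_lprod /Lam mul_mx_diag !mxE lamN mulr1 normCKC.
Qed.

Lemma one_sub_overlap_trace chi' : (0 < N)%N -> (0 < chi')%N ->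
  `|1 - overlap_trace Id (trunc_proj C N chi chi') N| <= eps_tot N lam chi'.
Proof.
move=> N_gt0 chi'_gt0.
rewrite -(overlap_trace0 Id (trunc_proj C N chi chi')) distrC -(telescope_sumr _ (leq0n N)).
apply: le_trans (ler_norm_sum _ _ _) _.
have -> : eps_tot N lam chi' = \sum_(1 <= j < N.+1) eps_i lam chi' j.
  by rewrite big_nat_recr //= eps_i_N // addr0.
rewrite big_add1 /=.
by apply: ler_sum_nat => k /= kN; rewrite distrC overlap_trace_step.
Qed.

Lemma norm2_trunc_le1 chi' : norm2 N Gamma lam (trunc_proj C N chi chi') <= 1.
Proof.
pose b := cast_ord (esym chiN) ord0; rewrite (norm2_overlap _ b).
have := le1_form_overlap (contractive_trunc chi') (leqnn N) (delta_mx b 0).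
by rewrite !qform_delta mxE eqxx.
Qed.

Lemma norm2_trunc_ge chi' : (0 < N)%N -> (0 < chi')%N -> norm2 N Gamma lam Id = 1 ->
  1 - 2 * eps_tot N lam chi' <= norm2 N Gamma lam (trunc_proj C N chi chi').
Proof.
move=> N_gt0 chi'_gt0 norm2_Id; set T := trunc_proj C N chi chi'.
pose b := cast_ord (esym chiN) ord0.
have := cs_dominated_overlap Id T (k := N) (delta_mx b 0) (delta_mx b 0).
rewrite !qform_delta -!norm2_overlap -overlap_trace_N norm2_Id.
set w := overlap_trace Id T N; have w_ge : 1 - eps_tot N lam chi' <= `|w|.
  rewrite lerBlDr; apply: le_trans (lerD (lexx _) (one_sub_overlap_trace _ _)) => //.
  by rewrite -[X in X <= _]normr1 -[X in `|X|](subrK w) addrC ler_normD.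
by move=> /(le_trans (ler_wMn2r 2 w_ge)); rewrite mulr_natl mulrnBl [1 *+ 2]mulr2n -addrA lerD2l.
Qed.

Lemma eps_tot_ge0 chi' : 0 <= eps_tot N lam chi'.
Proof. by rewrite /eps_tot big_nat sumr_ge0 // => k /andP[_ /ltnW]; apply: eps_i_ge0. Qed.

Lemma stab_factor_bounds chi' : (0 < chi')%N ->
  [/\ 0 < stab_factor N lam chi', stab_factor N lam chi' <= 1
    & 1 - eps_tot N lam chi' <= stab_factor N lam chi' ^+ 2].
Proof.
move=> chi'_gt0; apply: prod_sqrtC_bounds => k /andP[_ /ltnW kN].
by rewrite eps_i_ge0 ?eps_i_lt1.
Qed.

End VidalCanonical.

End Transfer.

Theorem theorem3 (C : numClosedFieldType) :
  (forall (N : nat) (chi : nat -> nat)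
          (Gamma : forall k : nat, 'I_2 -> 'M[C]_(chi k, chi k.+1))
          (lam : forall k : nat, 'rV[C]_(chi k)) (chi' : nat),
     (0 < N)%N -> (0 < chi')%N ->
     vidal_canonical N Gamma lam ->
     norm2 N Gamma lam (id_bonds C chi) = 1 ->
     [/\ n_lower N lam chi' <= n_star N Gamma lam chi' <= n_upper N lam chi',
         n_lower N lam chi' <= 1 & 1 <= n_upper N lam chi'])
  /\
  (forall delta : C, 0 < delta ->
   exists eta : C, 0 < eta /\
     forall (N : nat) (chi : nat -> nat)
            (Gamma : forall k : nat, 'I_2 -> 'M[C]_(chi k, chi k.+1))
            (lam : forall k : nat, 'rV[C]_(chi k)) (chi' : nat),
       (0 < N)%N -> (0 < chi')%N ->
       vidal_canonical N Gamma lam ->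
       norm2 N Gamma lam (id_bonds C chi) = 1 ->
       eps_tot N lam chi' < eta ->
       `|n_lower N lam chi' - 1| < delta /\ `|n_upper N lam chi' - 1| < delta).
Proof.
split=> [N chi Gamma lam chi' N_gt0 chi'_gt0 Hcan norm2_Id | delta delta_gt0].
  have [S_gt0 S_le1 S_ge] := stab_factor_bounds Hcan chi'_gt0.
  have eps_ge0 := eps_tot_ge0 Hcan chi'.
  have nT_ge : 1 - sqrtC (2 * eps_tot N lam chi') <= n_T N Gamma lam chi'.
    apply: sub1_sqrtC_le (norm2_trunc_ge Hcan N_gt0 chi'_gt0 norm2_Id).
      by rewrite mulr_ge0 ?ler0n.
    exact: norm2_ge0.
  have nT_le1 : n_T N Gamma lam chi' <= 1.
    by rewrite -sqrtC1 ler_sqrtC ?nnegrE ?norm2_ge0 ?ler01 ?(norm2_trunc_le1 Hcan).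
  have U1 := stab_upper_ge1 S_gt0 S_le1.
  have U0 : 0 <= (stab_factor N lam chi')^-1 by apply: le_trans U1.
  rewrite /n_star /n_lower n_upperE; split; last exact: U1.
  - by rewrite ler_wpM2r // ler_piMl.
  - exact: stab_lower_le1 S_gt0 eps_ge0 S_ge.
have [eta eta_gt0 Heta] := stab_uniform delta_gt0.
exists eta; split=> // N chi Gamma lam chi' _ chi'_gt0 Hcan _ eps_lt.
have [S_gt0 S_le1 S_ge] := stab_factor_bounds Hcan chi'_gt0.
by rewrite /n_lower n_upperE; apply: Heta => //; apply: eps_tot_ge0 Hcan chi'.
Qed.
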